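(* Let $\Gamma\subseteq\mathbb{R}$ be the value group of a field $\mathcal{K}$ with a nontrivial valuation. For any function $w:2^{[n]}\to\mathbb{R}$ there exist $\lambda=(\lambda_0,\dots,\lambda_n)\in\Gamma^{n+1}$ such that the function $\lambda\cdot w$, $(\lambda\cdot w)(S)=\lambda_{|S|}+w(S)$, is strictly submodular. Moreover, if $w$ is submodular and $\Gamma$ is dense in $\mathbb{R}$, then such $\lambda$ can be chosen arbitrarily small.
   Context: $\Gamma=\mathrm{val}(\mathcal{K}^* )$, a nontrivial additive subgroup of $\mathbb{R}$. A function $F:2^{[n]}\to\mathbb{R}$ is submodular if $F(S\cap T)+F(S\cup T)\le F(S)+F(T)$ for all $S,T\subseteq[n]$, and strictly submodular if $F(S)+F(S\cup\{i,j\})<F(S\cup\{i\})+F(S\cup\{j\})$ for all $S\subseteq[n]$ and distinct $i,j\in[n]\setminus S$. *)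

From HB Require Import structures.
From mathcomp Require Import all_boot all_order all_algebra.
From mathcomp Require Import reals.
Set Implicit Arguments. Unset Strict Implicit. Unset Printing Implicit Defensive.
Import Order.TTheory GRing.Theory Num.Theory.
Local Open Scope ring_scope.

(* A real (rank-one) valuation on a field K, given on nonzero elements
   (its value at 0 is irrelevant; conventionally +oo). *)
Definition is_valuation (R : realType) (K : fieldType) (v : K -> R) : Prop :=
  (forall x y : K, x != 0 -> y != 0 -> v (x * y) = v x + v y) /\
  (forall x y : K, x != 0 -> y != 0 -> x + y != 0 ->
      Num.min (v x) (v y) <= v (x + y)).

Definition nontrivial_valuation (R : realType) (K : fieldType) (v : K -> R) : Prop :=
  exists2 x, x != 0 :> K & v x != 0.

Definition value_group (R : realType) (K : fieldType) (v : K -> R) (g : R) : Prop :=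
  exists2 x, x != 0 :> K & v x = g.

Definition dense_in_R (R : realType) (G : R -> Prop) : Prop :=
  forall a b : R, a < b -> exists g, G g /\ a < g /\ g < b.

Definition submodular (R : realType) (n : nat) (F : {set 'I_n} -> R) : Prop :=
  forall S T : {set 'I_n}, F (S :&: T) + F (S :|: T) <= F S + F T.

Definition strictly_submodular (R : realType) (n : nat) (F : {set 'I_n} -> R)
  : Prop :=
  forall (S : {set 'I_n}) (i j : 'I_n), i != j -> i \notin S -> j \notin S ->
    F S + F (i |: (j |: S)) < F (i |: S) + F (j |: S).

Definition lam_act (R : realType) (n : nat) (lam : 'I_n.+1 -> R)
  (w : {set 'I_n} -> R) : {set 'I_n} -> R :=
  fun S => lam (inord #|S|) + w S.

(* Subtracting k^2 h from the values on k-element sets lowers every second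
   difference w(S) + w(S+i+j) - w(S+i) - w(S+j) by exactly 2h, because the
   second difference of k |-> k^2 is 2.  Since the value group is a nontrivial
   subgroup of R, it is unbounded, so some h in it dominates the finitely many
   second differences of an arbitrary w.  When w is submodular its second
   differences are already <= 0, so any h > 0 works, and density provides such
   an h in the value group small enough that all |k^2 h| are below eps. *)

From HB Require Import structures.
From mathcomp Require Import all_boot all_order all_algebra.
From mathcomp Require Import reals.
From mathcomp Require Import lra.

Set Implicit Arguments.
Unset Strict Implicit.
Unset Printing Implicit Defensive.
Import Order.TTheory GRing.Theory Num.Theory.
Local Open Scope ring_scope.

Section SecondDifferences.
Variables (R : realType) (n : nat).
Implicit Types (w : {set 'I_n} -> R) (S : {set 'I_n}) (i j : 'I_n).

Definition strictly_submodular_upto (c : R) w :=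
  forall S i j, i != j -> i \notin S -> j \notin S ->
    w S + w (i |: (j |: S)) < w (i |: S) + w (j |: S) + c.

Definition sq_penalty (h : R) (k : 'I_n.+1) : R := - ((k ^ 2)%:R * h).

Lemma setU1I_neq S i j : i != j -> (i |: S) :&: (j |: S) = S.
Proof.
move=> ij; apply/setP => x; rewrite !inE.
case: (x \in S); rewrite ?orbT ?andbT //= !orbF.
by case: eqP => // ->; rewrite (negbTE ij).
Qed.

Lemma setU1U S i j : (i |: S) :|: (j |: S) = i |: (j |: S).
Proof. by rewrite -setUA [S :|: _]setUC -setUA setUid. Qed.

Lemma submodular_strictly_upto w (c : R) :
  submodular w -> 0 < c -> strictly_submodular_upto c w.
Proof.
move=> subw c_gt0 S i j ij _ _.
by have := subw (i |: S) (j |: S); rewrite setU1I_neq // setU1U; lra.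
Qed.

Lemma strictly_submodular_upto_sum_norm w (c : R) :
  4 * \sum_A `|w A| < c -> strictly_submodular_upto c w.
Proof.
move=> big_c S i j _ _ _.
have le_sum A : `|w A| <= \sum_A `|w A|.
  by rewrite (bigD1 A) //= lerDl sumr_ge0.
move: (le_sum S) (le_sum (i |: (j |: S))) (le_sum (i |: S)) (le_sum (j |: S)).
rewrite !ler_norml => /andP[? ?] /andP[? ?] /andP[? ?] /andP[? ?].
lra.
Qed.

(* [inordK] applies because #|S| + 2 <= n. *)
Lemma strictly_submodular_sq_penalty w (h : R) :
  strictly_submodular_upto (2 * h) w ->
  strictly_submodular (lam_act (sq_penalty h) w).
Proof.
move=> w2h S i j ij iS jS; rewrite /lam_act /sq_penalty.
have ijS : i \notin j |: S by rewrite in_setU1 negb_or ij iS.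
have cardSij : #|i |: (j |: S)| = #|S|.+2 by rewrite cardsU1 ijS cardsU1 jS.
have cardSi : #|i |: S| = #|S|.+1 by rewrite cardsU1 iS.
have cardSj : #|j |: S| = #|S|.+1 by rewrite cardsU1 jS.
have := max_card (mem (i |: (j |: S))); rewrite card_ord cardSij => ltSn.
rewrite !inordK ?cardSij ?cardSi ?cardSj ?ltnS ?(ltnW ltSn) ?(ltnW (ltnW ltSn)) //.
rewrite !natrX !mulrSr.
have := w2h S i j ij iS jS.
set s := (#|S|)%:R; lra.
Qed.

Lemma normr_sq_penalty_lt (h : R) (k : 'I_n.+1) :
  0 < h -> `|sq_penalty h k| < (n.+1 ^ 2)%:R * h.
Proof.
move=> h_gt0; rewrite normrN ger0_norm ?mulr_ge0 ?ler0n ?ltW //.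
by rewrite ltr_pM2r // ltr_nat ltn_exp2r.
Qed.

End SecondDifferences.

Section ValueGroup.
Variables (R : realType) (K : fieldType) (v : K -> R).
Hypothesis hv : is_valuation v.

Lemma valuation1 : v 1 = 0.
Proof. by have := hv.1 1 1 (oner_neq0 _) (oner_neq0 _); rewrite mulr1; lra. Qed.

Lemma value_group0 : value_group v 0.
Proof. by exists 1; [exact: oner_neq0 | exact: valuation1]. Qed.

Lemma value_groupD a b :
  value_group v a -> value_group v b -> value_group v (a + b).
Proof.
case=> x x0 <-; case=> y y0 <-.
by exists (x * y); [rewrite mulf_neq0 | exact: hv.1].
Qed.

Lemma value_groupN a : value_group v a -> value_group v (- a).
Proof.
case=> x x0 <-; exists x^-1; first by rewrite invr_eq0.
have := hv.1 x x^-1 x0; rewrite invr_eq0 mulfV // valuation1 => /(_ x0).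
lra.
Qed.

Lemma value_groupMn a m : value_group v a -> value_group v (a *+ m).
Proof.
move=> va; elim: m => [|m IHm]; first exact: value_group0.
by rewrite mulrS; apply: value_groupD.
Qed.

Lemma value_group_pos : nontrivial_valuation v ->
  exists2 g, value_group v g & 0 < g.
Proof.
case=> x x0; rewrite neq_lt => /orP[vx_lt0 | vx_gt0].
- by exists (- v x); [apply: value_groupN; exists x | rewrite oppr_gt0].
- by exists (v x) => //; exists x.
Qed.

Lemma value_group_unbounded (c : R) : nontrivial_valuation v ->
  exists2 h, value_group v h & c < h.
Proof.
move=> /value_group_pos[g vg g_gt0].
pose m := Num.Def.archi_bound (`|c| / g).
exists (g *+ m); first exact: value_groupMn.
have : `|c| / g < m%:R by apply: archi_boundP; rewrite divr_ge0 // ltW.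
rewrite ltr_pdivrMr // => lt_cm; rewrite -mulr_natr mulrC.
exact: le_lt_trans (real_ler_norm (num_real c)) lt_cm.
Qed.

Lemma value_group_sq_penalty n h (k : 'I_n.+1) :
  value_group v h -> value_group v (sq_penalty h k).
Proof. by move=> vh; rewrite /sq_penalty mulr_natl; apply/value_groupN/value_groupMn. Qed.

End ValueGroup.

Theorem lemma3p1 (R : realType) (K : fieldType) (v : K -> R)
  (hv : is_valuation v) (hnt : nontrivial_valuation v)
  (n : nat) (w : {set 'I_n} -> R) :
  (exists lam : 'I_n.+1 -> R,
      (forall k, value_group v (lam k)) /\ strictly_submodular (lam_act lam w)) /\
  (submodular w -> dense_in_R (value_group v) ->
    forall eps : R, 0 < eps ->
      exists lam : 'I_n.+1 -> R,
        (forall k, value_group v (lam k)) /\ (forall k, `|lam k| < eps) /\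
        strictly_submodular (lam_act lam w)).
Proof.
split.
  have [h vh big_h] := value_group_unbounded hv (2 * \sum_A `|w A|) hnt.
  exists (sq_penalty h); split=> [k|]; first exact: value_group_sq_penalty.
  by apply/strictly_submodular_sq_penalty/strictly_submodular_upto_sum_norm; lra.
move=> subw dense eps eps_gt0.
have N_gt0 : 0 < (n.+1 ^ 2)%:R :> R by rewrite ltr0n expn_gt0.
have [h [vh [h_gt0 small_h]]] := dense 0 (eps / (n.+1 ^ 2)%:R) (divr_gt0 eps_gt0 N_gt0).
exists (sq_penalty h); split=> [k|]; first exact: value_group_sq_penalty.
split=> [k|].
  by apply: lt_trans (normr_sq_penalty_lt k h_gt0) _; rewrite mulrC -ltr_pdivlMr.
by apply/strictly_submodular_sq_penalty/submodular_strictly_upto => //; lra.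
Qed.
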